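(* Consider the finite-horizon setting below with horizon $T$, transitions $P$, and agent rewards $\rho$, with $p_{\mathrm{maj}},p_{\mathrm{min}}>0$. Let $R_{\max}>0$ with $|R_{s,a}|\le R_{\max}$ and $|\rho_{s,a}|\le R_{\max}$ for all $s,a$. Let $\pi_0$ be a policy with $\Lambda^{(\pi_0)}_{s,a}\ge\lambda_0$ for all $s\in S,a\in A$, for some $\lambda_0>0$. Let $\epsilon,\delta>0$ and let $N_0\ge\dfrac{128\,T^2|S|^2R_{\max}^2\log(2|S|^2|A|/\delta)}{\lambda_0^2\epsilon^2}$. Run $N_0$ independent episodes of $\pi_0$ and form the empirical transition estimate $\hat P$ as described below; let $\hat M$ denote the model with $P$ replaced by $\hat P$. Assume $\Pi_{\mathrm{DP},\epsilon/4}\ne\varnothing$ and let $\pi^*$ be a maximizer of $R^{(\pi)}$ over $\Pi_{\mathrm{DP},\epsilon/4}$ (computed in the true model). Then with probability at least $1-\delta$ over the episodes, the set $\hat\Pi_{\mathrm{DP},\epsilon/2}$ (computed in $\hat M$) is nonempty, and every maximizer $\hat\pi$ of $\hat R^{(\pi)}$ over $\hat\Pi_{\mathrm{DP},\epsilon/2}$ satisfies $\hat\pi\in\Pi_{\mathrm{DP},\epsilon}$ and $R^{(\pi^* )}-R^{(\hat\pi)}\le\epsilon$, where $R^{(\cdot)}$ and $\Pi_{\mathrm{DP},\epsilon}$ refer to the true model.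
   Context: Finite-horizon setting: $S,A$ finite nonempty sets, $D$ a probability distribution on $S$, transition kernel $P$ ($P_{s,a,s'}\ge0$, $\sum_{s'}P_{s,a,s'}=1$), rewards $R\in\mathbb{R}^{S\times A}$, horizon $T\in\mathbb{N}_{\ge1}$. A policy is $\pi\in\mathbb{R}^{S\times A}$ with $\pi_{s,a}\ge0$, $\sum_a\pi_{s,a}=1$. Let $P^{(\pi)}_{s,s'}=\sum_a\pi_{s,a}P_{s,a,s'}$; for a distribution $\mu$, $\mu^{(\pi,0)}=\mu$, $\mu^{(\pi,t)}_{s'}=\sum_s\mu^{(\pi,t-1)}_sP^{(\pi)}_{s,s'}$, and $\bar\mu^{(\pi)}=\frac1T\sum_{t=0}^{T-1}\mu^{(\pi,t)}$. Let $\Lambda^{(\pi)}_{s,a}=\bar D^{(\pi)}_s\pi_{s,a}$ and $R^{(\pi)}=\sum_{s,a}\Lambda^{(\pi)}_{s,a}R_{s,a}$. Fairness: $S=Z\times\tilde S$, $Z=\{\mathrm{maj},\mathrm{min}\}$, agent rewards $\rho\in\mathbb{R}^{S\times A}$; $p_z=\sum_{\tilde s}D_{(z,\tilde s)}$, $(D_z)_s=D_s\mathbb{I}[s=(z,\tilde s)\text{ for some }\tilde s]/p_z$; $\rho_z^{(\pi)}=\sum_{s,a}(\bar D_z^{(\pi)})_s\pi_{s,a}\rho_{s,a}$ where $\bar D_z^{(\pi)}$ is $\bar\mu^{(\pi)}$ for $\mu=D_z$; $\Pi_{\mathrm{DP},\eta}=\{\pi:|\rho_{\mathrm{maj}}^{(\pi)}-\rho_{\mathrm{min}}^{(\pi)}|\le\eta\}$.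 The same quantities with $P$ replaced by $\hat P$ are denoted $\hat R^{(\pi)},\hat\rho_z^{(\pi)},\hat\Pi_{\mathrm{DP},\eta}$. An episode of $\pi_0$ is a random trajectory $s_0\sim D$, $a_t\sim(\pi_0)_{s_t,\cdot}$, $s_{t+1}\sim P_{s_t,a_t,\cdot}$ for $t=0,\dots,T-1$, producing the observed tuples $(s_t,a_t,s_{t+1})$; episodes are independent. $\hat P_{s,a,s'}$ is the number of observed tuples $(s,a,s')$ divided by the number of observed tuples of the form $(s,a,\cdot)$ (an arbitrary distribution if the latter is $0$). *)

From Stdlib Require Import Reals.
From HB Require Import structures.
From mathcomp Require Import all_boot.

Set Implicit Arguments.
Unset Strict Implicit.
Unset Printing Implicit Defensive.

Local Open Scope R_scope.

Definition sumR {I : finType} (F : I -> R) : R := \big[Rplus/R0]_(i : I) F i.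

Definition is_dist {X : finType} (mu : X -> R) : Prop :=
  (forall x, 0 <= mu x) /\ sumR mu = 1.

Definition is_kernel {S A : finType} (P : S -> A -> S -> R) : Prop :=
  forall s a, is_dist (P s a).

Definition is_policy {S A : finType} (pi : S -> A -> R) : Prop :=
  forall s, is_dist (pi s).

Definition Ppi {S A : finType} (P : S -> A -> S -> R) (pi : S -> A -> R)
  (s s' : S) : R := sumR (fun a : A => pi s a * P s a s').

Fixpoint mu_t {S A : finType} (P : S -> A -> S -> R) (pi : S -> A -> R)
  (mu : S -> R) (t : nat) : S -> R :=
  match t with
  | O => mu
  | t'.+1 => fun s' => sumR (fun s => mu_t P pi mu t' s * Ppi P pi s s')
  end.

Definition mubar {S A : finType} (P : S -> A -> S -> R) (pi : S -> A -> R)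
  (T : nat) (mu : S -> R) (s : S) : R :=
  / INR T * \big[Rplus/R0]_(t < T) mu_t P pi mu t s.

Definition Lam {S A : finType} (P : S -> A -> S -> R) (pi : S -> A -> R)
  (T : nat) (mu : S -> R) (s : S) (a : A) : R := mubar P pi T mu s * pi s a.

(* sum_{s,a} Lambda_{s,a} r_{s,a}; R^(pi) = Ret P pi T D Rw *)
Definition Ret {S A : finType} (P : S -> A -> S -> R) (pi : S -> A -> R)
  (T : nat) (mu : S -> R) (r : S -> A -> R) : R :=
  sumR (fun s => sumR (fun a => Lam P pi T mu s a * r s a)).

(* Fairness: S = Z x St with Z = bool, true = maj, false = min. *)
Definition Zmaj : bool := true.
Definition Zmin : bool := false.

Definition pz {St : finType} (D : bool * St -> R) (z : bool) : R :=
  sumR (fun st : St => D (z, st)).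

Definition Dz {St : finType} (D : bool * St -> R) (z : bool) (s : bool * St) : R :=
  if s.1 == z then D s / pz D z else 0.

Definition rhoz {St A : finType} (P : bool * St -> A -> bool * St -> R)
  (pi : bool * St -> A -> R) (T : nat) (D : bool * St -> R)
  (rho : bool * St -> A -> R) (z : bool) : R :=
  Ret P pi T (Dz D z) rho.

Definition PiDP {St A : finType} (P : bool * St -> A -> bool * St -> R)
  (T : nat) (D : bool * St -> R) (rho : bool * St -> A -> R) (eta : R)
  (pi : bool * St -> A -> R) : Prop :=
  is_policy pi /\ Rabs (rhoz P pi T D rho Zmaj - rhoz P pi T D rho Zmin) <= eta.

Notation episode S A T := ({ffun 'I_T.+1 -> S} * {ffun 'I_T -> A})%type.

Definition ep_tuple {S A : finType} {T : nat} (e : episode S A T) (t : 'I_T)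
  : S * A * S :=
  (e.1 (widen_ord (leqnSn T) t), e.2 t, e.1 (lift ord0 t)).

Definition ep_prob {S A : finType} {T : nat} (D : S -> R) (pi0 : S -> A -> R)
  (P : S -> A -> S -> R) (e : episode S A T) : R :=
  D (e.1 ord0) *
  \big[Rmult/R1]_(t < T)
     (let: (s, a, s') := ep_tuple e t in pi0 s a * P s a s').

Notation dataset S A T N := {ffun 'I_N -> episode S A T}.

Definition data_prob {S A : finType} {T N : nat} (D : S -> R) (pi0 : S -> A -> R)
  (P : S -> A -> S -> R) (d : dataset S A T N) : R :=
  \big[Rmult/R1]_(i < N) ep_prob D pi0 P (d i).

Definition count_sas {S A : finType} {T N : nat} (d : dataset S A T N)
  (s : S) (a : A) (s' : S) : nat :=
  (\sum_(i < N) \sum_(t < T) (ep_tuple (d i) t == (s, a, s') : nat))%N.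

Definition count_sa {S A : finType} {T N : nat} (d : dataset S A T N)
  (s : S) (a : A) : nat :=
  (\sum_(i < N) \sum_(t < T) ((ep_tuple (d i) t).1 == (s, a) : nat))%N.

(* empirical transition estimate; Q gives the (arbitrary) fallback
   distribution used when no tuple (s,a,.) was observed *)
Definition Phat {S A : finType} {T N : nat} (Q : S -> A -> S -> R)
  (d : dataset S A T N) (s : S) (a : A) (s' : S) : R :=
  if (count_sa d s a == 0)%N then Q s a s'
  else INR (count_sas d s a s') / INR (count_sa d s a).

From Stdlib Require Import Reals Lra Psatz.
From HB Require Import structures.
From mathcomp Require Import all_boot.
From mathcomp Require Import Rstruct.
Local Open Scope R_scope.

(* The proof separates a deterministic and a probabilistic part.
   - Simulation lemma [Ret_diff]: if two kernels differ entrywise by at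
     most e, every return (reward or group reward) differs by at most
     Rmax * T * |S| * e / 2.  With e = lam := eps / (4 T |S| Rmax) every
     return is estimated to within eps/8, and a plug-in argument
     [plugin_conclusion] shows that every constrained maximizer of the
     empirical model is eps-fair and eps-optimal in the true model.
   - Concentration: a dataset is good [good_data] if every pair (s,a) is
     visited at least k := N T lambda0 / 4 times and every next-state count
     is within lam * (visits) of its conditional mean; then |Phat - P| <= lam.
     Exact path-sum formulas for expectations over episodes give
     exponential-moment bounds for the visit counts and for supermartingale
     deviation scores; a Chernoff-style majorant [bad_majorant], >= 1 on bad
     datasets, bounds their probability, and [sample_size_bound] shows the
     bound is at most delta under the sample-size hypothesis. *)

Lemma bigR_le (I : Type) (r : seq I) (P : pred I) (F G : I -> R) :
  (forall i, P i -> F i <= G i) ->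
  \big[Rplus/R0]_(i <- r | P i) F i <= \big[Rplus/R0]_(i <- r | P i) G i.
Proof.
move=> H; apply: (big_ind2 (fun x y => x <= y)); [lra| |exact: H].
move=> ? ? ? ? ? ?; lra.
Qed.

Lemma bigR_ge0 (I : Type) (r : seq I) (P : pred I) (F : I -> R) :
  (forall i, P i -> 0 <= F i) -> 0 <= \big[Rplus/R0]_(i <- r | P i) F i.
Proof.
move=> H; apply: (big_ind (fun x => 0 <= x)); [lra| |exact: H].
move=> ? ? ? ?; lra.
Qed.

Lemma prodR_ge0 (I : Type) (r : seq I) (P : pred I) (F : I -> R) :
  (forall i, P i -> 0 <= F i) -> 0 <= \big[Rmult/R1]_(i <- r | P i) F i.
Proof.
move=> H; apply: (big_ind (fun x => 0 <= x)); [lra| |exact: H].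
move=> ? ? ? ?; nra.
Qed.

Lemma bigR_INR (I : Type) (r : seq I) (P : pred I) (F : I -> nat) :
  INR (\sum_(i <- r | P i) F i)%N = \big[Rplus/R0]_(i <- r | P i) INR (F i).
Proof. by apply: (big_morph INR) => // x y; rewrite plus_INR. Qed.

Lemma bigR_exp (I : Type) (r : seq I) (P : pred I) (F : I -> R) :
  exp (\big[Rplus/R0]_(i <- r | P i) F i) = \big[Rmult/R1]_(i <- r | P i) exp (F i).
Proof. exact: (big_morph exp exp_plus exp_0). Qed.

Section SumR.
Context {I J : finType}.

Lemma eq_sumR (F G : I -> R) : (forall i, F i = G i) -> sumR F = sumR G.
Proof. by move=> H; apply: eq_bigr => i _. Qed.

Lemma sumR_ge0 (F : I -> R) : (forall i, 0 <= F i) -> 0 <= sumR F.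
Proof. by move=> H; apply: bigR_ge0. Qed.

Lemma sumR_le (F G : I -> R) : (forall i, F i <= G i) -> sumR F <= sumR G.
Proof. by move=> H; apply: bigR_le. Qed.

Lemma sumR_plus (F G : I -> R) : sumR (fun i => F i + G i) = sumR F + sumR G.
Proof. exact: big_split. Qed.

Lemma sumR_scal c (F : I -> R) : sumR (fun i => c * F i) = c * sumR F.
Proof. by rewrite /sumR big_distrr. Qed.

Lemma sumR_scar c (F : I -> R) : sumR (fun i => F i * c) = sumR F * c.
Proof. by rewrite /sumR big_distrl. Qed.

Lemma sumR_minus (F G : I -> R) : sumR F - sumR G = sumR (fun i => F i - G i).
Proof.
have -> : sumR F - sumR G = sumR F + (-1) * sumR G by ring.
by rewrite -sumR_scal -sumR_plus; apply: eq_sumR => i; ring.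
Qed.

Lemma sumR_abs (F : I -> R) : Rabs (sumR F) <= sumR (fun i => Rabs (F i)).
Proof.
apply: (big_ind2 (fun x y => Rabs x <= y)); [by rewrite Rabs_R0; lra| |move=> *; lra].
move=> x1 x2 y1 y2 h1 h2; apply: Rle_trans (Rabs_triang _ _) _; lra.
Qed.

Lemma sumR_const (c : R) : sumR (fun _ : I => c) = INR #|I| * c.
Proof.
rewrite /sumR big_const cardE /=.
elim: (enum I) => [|x s IH] /=; first lra.
by rewrite IH; destruct (size s); simpl; lra.
Qed.

Lemma sumR_swap (F : I -> J -> R) :
  sumR (fun i => sumR (fun j => F i j)) = sumR (fun j => sumR (fun i => F i j)).
Proof. exact: exchange_big. Qed.

Lemma sumR_mul_swap (w : I -> R) (F : I -> J -> R) :
  sumR (fun i => w i * sumR (fun j => F i j)) = sumR (fun j => sumR (fun i => w i * F i j)).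
Proof. by rewrite -sumR_swap; apply: eq_sumR => i; rewrite /sumR big_distrr. Qed.

Lemma sumR_pair (F : I * J -> R) : sumR F = sumR (fun i => sumR (fun j => F (i, j))).
Proof. by rewrite /sumR pair_big; apply: eq_bigr => -[i j]. Qed.

Lemma sumR_term (F : I -> R) i : (forall j, 0 <= F j) -> F i <= sumR F.
Proof.
move=> h; rewrite /sumR (bigD1 i) //=.
have : 0 <= \big[Rplus/R0]_(j | j != i) F j by apply: bigR_ge0.
lra.
Qed.

Lemma sumR_pick (F : I -> R) i0 : (forall i, i != i0 -> F i = 0) -> sumR F = F i0.
Proof. by move=> H; rewrite /sumR (bigD1 i0) //= big1 ?Rplus_0_r. Qed.

Lemma prodR_split (F G : I -> R) :
  \big[Rmult/R1]_(i : I) F i * \big[Rmult/R1]_(i : I) G i = \big[Rmult/R1]_(i : I) (F i * G i).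
Proof. by rewrite big_split. Qed.

End SumR.

Lemma sumR_bool (F : bool -> R) : sumR F = F true + F false.
Proof. by rewrite /sumR big_bool. Qed.

Lemma prodR_const (N : nat) (c : R) : \big[Rmult/R1]_(i < N) c = c ^ N.
Proof. by rewrite big_const_ord; elim: N => //= N ->. Qed.

Lemma sum_ord_INR T : sumR (fun t : 'I_T => INR t) * 2 = INR T * (INR T - 1).
Proof.
elim: T => [|T IH]; first by rewrite /sumR big_ord0 /=; ring.
rewrite /sumR big_ord_recr.
have -> : \big[Rplus/R0]_(i < T) INR (widen_ord (leqnSn T) i) = sumR (fun t : 'I_T => INR t) by [].
have -> : INR (@ord_max T) = INR T by [].
rewrite Rmult_plus_distr_r IH S_INR; ring.
Qed.

Definition indR (b : bool) : R := if b then 1 else 0.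

Lemma indR_sq b : indR b * indR b = indR b.
Proof. by case: b => /=; ring. Qed.

Lemma indR_01 b : 0 <= indR b <= 1.
Proof. case: b => /=; lra. Qed.

Lemma INR_indR (b : bool) : INR (b : nat) = indR b.
Proof. by case: b. Qed.

Lemma sumR_ind (I : finType) (F : I -> R) i : sumR (fun j => F j * indR (j == i)) = F i.
Proof.
rewrite (@sumR_pick _ _ i) /= ?eqxx /=; first ring.
by move=> j /negbTE hj; rewrite hj /=; ring.
Qed.

Lemma exp_le_mono x y : x <= y -> exp x <= exp y.
Proof. by case/Rle_lt_or_eq_dec => [/exp_increasing/Rlt_le|->]; [|lra]. Qed.

Lemma exp_ge1 x : 0 <= x -> 1 <= exp x.
Proof. move=> h; have := exp_ineq1_le x; lra. Qed.

Lemma exp_pow x n : exp x ^ n = exp (INR n * x).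
Proof.
elim: n => [|n IH]; first by rewrite /= Rmult_0_l exp_0.
have -> : exp x ^ n.+1 = exp x * exp x ^ n by [].
by rewrite IH -exp_plus S_INR; congr exp; ring.
Qed.

(* A linear upper bound for exp(-y) on [0, 1], from 1 + y <= exp y. *)
Lemma exp_neg_le y : 0 <= y <= 1 -> exp (- y) <= 1 - y / 2.
Proof.
move=> hy; have h1 := exp_ineq1_le y; have h3 := exp_pos (- y).
have h2 : exp y * exp (- y) = 1 by rewrite -exp_plus Rplus_opp_r exp_0.
nra.
Qed.

Lemma exp_quad_bound u : u <= 1/2 -> exp u <= 1 + u + 2 * u ^ 2.
Proof.
move=> hu; have h1 := exp_ineq1_le (- u); have h3 := exp_pos u.
have h2 : exp u * exp (- u) = 1 by rewrite -exp_plus Rplus_opp_r exp_0.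
nra.
Qed.

Section MDP.
Variables (S A : finType).
Implicit Types (P : S -> A -> S -> R) (pi : S -> A -> R) (mu : S -> R).

Lemma Ppi_ge0 P pi s s' : is_kernel P -> is_policy pi -> 0 <= Ppi P pi s s'.
Proof.
move=> hP hpi; apply: sumR_ge0 => a.
have := (hP s a).1 s'; have := (hpi s).1 a; nra.
Qed.

Lemma Ppi_row P pi s : is_kernel P -> is_policy pi -> sumR (Ppi P pi s) = 1.
Proof.
move=> hP hpi; rewrite /Ppi sumR_swap -(hpi s).2; apply: eq_sumR => a.
by rewrite sumR_scal (hP s a).2 Rmult_1_r.
Qed.

Lemma mu_t_dist P pi mu t : is_kernel P -> is_policy pi -> is_dist mu ->
  is_dist (mu_t P pi mu t).
Proof.
move=> hP hpi hmu; elim: t => [|t [IH0 IH1]] //=; split.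
- move=> y; apply: sumR_ge0 => x; have := IH0 x; have := Ppi_ge0 _ _ x y hP hpi; nra.
- rewrite sumR_swap -IH1; apply: eq_sumR => x.
  by rewrite sumR_scal Ppi_row // Rmult_1_r.
Qed.

Lemma mubar_dist P pi T mu : is_kernel P -> is_policy pi -> is_dist mu -> (1 <= T)%N ->
  is_dist (mubar P pi T mu).
Proof.
move=> hP hpi hmu hT.
have hT' : 0 < INR T by apply: lt_0_INR; apply/ltP.
split.
- move=> s; apply: Rmult_le_pos; first by apply/Rlt_le/Rinv_0_lt_compat.
  by apply: bigR_ge0 => t _; exact: (mu_t_dist _ _ _ t hP hpi hmu).1.
- rewrite /mubar sumR_scal sumR_swap.
  rewrite (@eq_sumR _ _ (fun _ => 1)); last by move=> t; exact: (mu_t_dist _ _ _ t hP hpi hmu).2.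
  rewrite sumR_const card_ord; field; lra.
Qed.

Lemma Ret_factor P pi T mu r :
  Ret P pi T mu r = sumR (fun s => mubar P pi T mu s * sumR (fun a => pi s a * r s a)).
Proof. by apply: eq_sumR => s; rewrite -sumR_scal; apply: eq_sumR => a; rewrite /Lam; ring. Qed.

Lemma policy_avg_bound pi r Rmax s : is_policy pi -> (forall s a, Rabs (r s a) <= Rmax) ->
  Rabs (sumR (fun a => pi s a * r s a)) <= Rmax.
Proof.
move=> hpi hr; apply: Rle_trans (sumR_abs _) _.
have [pi0 pi1] := hpi s.
apply: Rle_trans (_ : sumR (fun a => pi s a * Rmax) <= _).
- apply: sumR_le => a; rewrite Rabs_mult (Rabs_right _ (Rle_ge _ _ (pi0 a))).
  exact: Rmult_le_compat_l.
- by rewrite sumR_scar pi1; lra.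
Qed.

Lemma Ret_bound P pi T mu r Rmax : is_kernel P -> is_policy pi -> is_dist mu -> (1 <= T)%N ->
  (forall s a, Rabs (r s a) <= Rmax) -> Rabs (Ret P pi T mu r) <= Rmax.
Proof.
move=> hP hpi hmu hT hr; rewrite Ret_factor.
have [h0 h1] := mubar_dist _ _ _ _ hP hpi hmu hT.
apply: Rle_trans (sumR_abs _) _.
apply: Rle_trans (_ : sumR (fun s => mubar P pi T mu s * Rmax) <= _).
- apply: sumR_le => s; rewrite Rabs_mult (Rabs_right _ (Rle_ge _ _ (h0 s))).
  apply: Rmult_le_compat_l; [exact: h0|exact: policy_avg_bound].
- by rewrite sumR_scar h1; lra.
Qed.

Lemma Ppi_diff P P' pi x y e : is_policy pi ->
  (forall s a s', Rabs (P s a s' - P' s a s') <= e) ->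
  Rabs (Ppi P pi x y - Ppi P' pi x y) <= e.
Proof.
move=> hpi he; have [pi0 pi1] := hpi x.
rewrite /Ppi sumR_minus; apply: Rle_trans (sumR_abs _) _.
apply: Rle_trans (_ : sumR (fun a => pi x a * e) <= _); last by rewrite sumR_scar pi1; lra.
apply: sumR_le => a; rewrite -Rmult_minus_distr_l Rabs_mult.
rewrite (Rabs_right _ (Rle_ge _ _ (pi0 a))); exact: Rmult_le_compat_l.
Qed.

Lemma mu_t_diff P P' pi mu e t : is_kernel P -> is_kernel P' -> is_policy pi -> is_dist mu ->
  (forall s a s', Rabs (P s a s' - P' s a s') <= e) ->
  sumR (fun s => Rabs (mu_t P pi mu t s - mu_t P' pi mu t s)) <= INR t * (INR #|S| * e).
Proof.
move=> hP hP' hpi hmu he; elim: t => [|t IH].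
  rewrite /= (@eq_sumR _ _ (fun _ => 0)); last by move=> *; rewrite Rminus_diag Rabs_R0.
  rewrite sumR_const; lra.
have [m0 m1] := mu_t_dist _ _ _ t hP' hpi hmu.
set d := fun x => Rabs (mu_t P pi mu t x - mu_t P' pi mu t x).
apply: Rle_trans (_ : sumR (fun y => sumR (fun x =>
   d x * Ppi P pi x y + mu_t P' pi mu t x * e)) <= _).
  apply: sumR_le => y /=; rewrite sumR_minus.
  apply: Rle_trans (sumR_abs _) _; apply: sumR_le => x.
  have -> : mu_t P pi mu t x * Ppi P pi x y - mu_t P' pi mu t x * Ppi P' pi x y =
    (mu_t P pi mu t x - mu_t P' pi mu t x) * Ppi P pi x y
    + mu_t P' pi mu t x * (Ppi P pi x y - Ppi P' pi x y) by ring.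
  apply: Rle_trans (Rabs_triang _ _) _.
  rewrite !Rabs_mult (Rabs_right (Ppi P pi x y)); last exact/Rle_ge/Ppi_ge0.
  rewrite (Rabs_right (mu_t P' pi mu t x)); last exact: Rle_ge.
  apply: Rplus_le_compat_l; apply: Rmult_le_compat_l => //; exact: Ppi_diff.
rewrite sumR_swap (@eq_sumR _ _ (fun x => d x + mu_t P' pi mu t x * (INR #|S| * e))); last first.
  by move=> x; rewrite sumR_plus sumR_scal Ppi_row // sumR_const; ring.
rewrite sumR_plus sumR_scar m1 S_INR /d; lra.
Qed.

Lemma Ret_diff P P' pi T mu r Rmax e : is_kernel P -> is_kernel P' -> is_policy pi ->
  is_dist mu -> (1 <= T)%N -> 0 <= Rmax -> 0 <= e -> (forall s a, Rabs (r s a) <= Rmax) ->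
  (forall s a s', Rabs (P s a s' - P' s a s') <= e) ->
  Rabs (Ret P pi T mu r - Ret P' pi T mu r) <= Rmax * (INR T * (INR #|S| * e)) / 2.
Proof.
move=> hP hP' hpi hmu hT hR e0 hr he.
have hT' : 0 < INR T by apply: lt_0_INR; apply/ltP.
have hne : 0 <= INR #|S| * e by apply: Rmult_le_pos; [apply: pos_INR|].
set dm := fun s => Rabs (mubar P pi T mu s - mubar P' pi T mu s).
have occupancy_diff : sumR dm <= INR T * (INR #|S| * e) / 2.
  apply: Rle_trans (_ : sumR (fun s => / INR T * sumR (fun t : 'I_T =>
     Rabs (mu_t P pi mu t s - mu_t P' pi mu t s))) <= _).
    apply: sumR_le => s; rewrite /dm /mubar -Rmult_minus_distr_l Rabs_mult.
    rewrite Rabs_right; last by apply/Rle_ge/Rlt_le/Rinv_0_lt_compat.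
    apply: Rmult_le_compat_l; first by apply/Rlt_le/Rinv_0_lt_compat.
    rewrite -/(sumR _) -/(sumR _) sumR_minus; exact: sumR_abs.
  rewrite sumR_scal sumR_swap.
  apply: Rle_trans (_ : / INR T * sumR (fun t : 'I_T => INR t * (INR #|S| * e)) <= _).
    apply: Rmult_le_compat_l; first by apply/Rlt_le/Rinv_0_lt_compat.
    by apply: sumR_le => t; exact: mu_t_diff.
  have HS := sum_ord_INR T.
  rewrite sumR_scar.
  have -> : sumR (fun t : 'I_T => INR t) = INR T * (INR T - 1) / 2 by lra.
  have -> : / INR T * (INR T * (INR T - 1) / 2 * (INR #|S| * e)) =
    (INR T - 1) * (INR #|S| * e) / 2 by field; lra.
  nra.
rewrite !Ret_factor sumR_minus; apply: Rle_trans (sumR_abs _) _.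
apply: Rle_trans (_ : sumR (fun s => dm s * Rmax) <= _).
  apply: sumR_le => s; rewrite -Rmult_minus_distr_r Rabs_mult.
  apply: Rmult_le_compat_l; [exact: Rabs_pos|exact: policy_avg_bound].
rewrite sumR_scar; nra.
Qed.

End MDP.
Arguments Ppi_row {S A}. Arguments mu_t_dist {S A}. Arguments mubar_dist {S A}.
Arguments Ret_bound {S A}. Arguments Ret_diff {S A}.

Lemma Lam_total {S A : finType} (P : S -> A -> S -> R) pi T mu :
  is_kernel P -> is_policy pi -> is_dist mu -> (1 <= T)%N ->
  sumR (fun s => sumR (fun a => Lam P pi T mu s a)) = 1.
Proof.
move=> hP hpi hmu hT; rewrite -(mubar_dist P pi T mu hP hpi hmu hT).2.
by apply: eq_sumR => s; rewrite sumR_scal (hpi s).2 Rmult_1_r.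
Qed.

Lemma Lam_le1 (S A : finType) (P : S -> A -> S -> R) pi T mu s a :
  is_kernel P -> is_policy pi -> is_dist mu -> (1 <= T)%N -> Lam P pi T mu s a <= 1.
Proof.
move=> hP hpi hmu hT; have [m0 _] := mubar_dist P pi T mu hP hpi hmu hT.
have Lam0 : forall s a, 0 <= Lam P pi T mu s a.
  by move=> s' a'; apply: Rmult_le_pos; [exact: m0|exact: (hpi s').1].
rewrite -(Lam_total P pi T mu hP hpi hmu hT); apply: Rle_trans (sumR_term _ s _).
  by apply: sumR_term.
by move=> s'; apply: sumR_ge0.
Qed.

Lemma Dz_dist (St : finType) (D : bool * St -> R) z : is_dist D -> 0 < pz D z ->
  is_dist (Dz D z).
Proof.
move=> [h0 h1] hz; split.
- move=> s; rewrite /Dz; case: ifP => _; last lra.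
  by apply: Rmult_le_pos; [exact: h0|apply/Rlt_le/Rinv_0_lt_compat].
- rewrite sumR_pair sumR_bool /Dz.
  have other : forall b, b != z ->
      sumR (fun j : St => if (b, j).1 == z then D (b, j) / pz D z else 0) = 0.
    move=> b /negbTE hb; rewrite (@eq_sumR _ _ (fun _ => 0)); last by move=> j /=; rewrite hb.
    by rewrite sumR_const Rmult_0_r.
  have own : sumR (fun j : St => if (z, j).1 == z then D (z, j) / pz D z else 0) = 1.
    rewrite (@eq_sumR _ _ (fun j => D (z, j) * / pz D z)); last by move=> j /=; rewrite eqxx.
    by rewrite sumR_scar; rewrite /pz in hz *; field; lra.
  case: z hz other own => hz other own.
  + by rewrite own (other false) //; ring.
  + by rewrite own (other true) //; ring.
Qed.

(* Group rewards are returns for the conditional initial distributions. *)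
Lemma rhoz_bound {St A : finType} (D : bool * St -> R) (P : bool * St -> A -> bool * St -> R)
    (rho : bool * St -> A -> R) pi T Rmax z :
  is_dist D -> 0 < pz D z -> is_kernel P -> is_policy pi -> (1 <= T)%N ->
  (forall s a, Rabs (rho s a) <= Rmax) -> Rabs (rhoz P pi T D rho z) <= Rmax.
Proof. by move=> hD hz hP hpi hT hr; apply: Ret_bound => //; exact: Dz_dist. Qed.

Lemma count_sum (S A : finType) (T N : nat) (d : dataset S A T N) s a :
  (\sum_(s' : S) count_sas d s a s')%N = count_sa d s a.
Proof.
rewrite /count_sas /count_sa exchange_big; apply: eq_bigr => i _.
rewrite exchange_big; apply: eq_bigr => t _.
move: (ep_tuple (d i) t) => -[[x y] z] /=.
case: eqP => [[-> ->]|hne].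
- rewrite (bigD1 z) //= eqxx big1 ?addn0 // => j hj.
  by apply/eqP; rewrite eqb0; apply/negP => /eqP [hz]; move: hj; rewrite hz eqxx.
- apply: big1 => j _; apply/eqP; rewrite eqb0; apply/negP => /eqP [h1 h2 h3].
  by apply: hne; rewrite h1 h2.
Qed.

Lemma Phat_kernel {S A : finType} {T N : nat} (Q : S -> A -> S -> R) (d : dataset S A T N) :
  is_kernel Q -> is_kernel (Phat Q d).
Proof.
move=> hQ s a; rewrite /Phat; case: eqP => h0; first exact: hQ.
have hc : 0 < INR (count_sa d s a) by apply: lt_0_INR; apply/ltP; rewrite lt0n; apply/eqP.
split.
- by move=> s'; apply: Rmult_le_pos; [exact: pos_INR|apply/Rlt_le/Rinv_0_lt_compat].
- rewrite /Rdiv sumR_scar /sumR -bigR_INR count_sum; field; lra.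
Qed.

Definition plugin_guarantee {St A : finType} (D : bool * St -> R)
    (P Ph : bool * St -> A -> bool * St -> R) (Rw rho : bool * St -> A -> R) (T : nat)
    (eps : R) (pistar : bool * St -> A -> R) : Prop :=
  (exists pi, PiDP Ph T D rho (eps / 2) pi) /\
  forall pihat,
    PiDP Ph T D rho (eps / 2) pihat ->
    (forall pi, PiDP Ph T D rho (eps / 2) pi -> Ret Ph pi T D Rw <= Ret Ph pihat T D Rw) ->
    PiDP P T D rho eps pihat /\ Ret P pistar T D Rw - Ret P pihat T D Rw <= eps.

Lemma plugin_conclusion {St A : finType} (D : bool * St -> R)
    (P Ph : bool * St -> A -> bool * St -> R) (Rw rho : bool * St -> A -> R) (T : nat)
    (eps eta : R) (pistar : bool * St -> A -> R) :
  0 < eps ->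
  (forall pi, is_policy pi -> Rabs (Ret P pi T D Rw - Ret Ph pi T D Rw) <= eta) ->
  (forall pi z, is_policy pi -> Rabs (rhoz P pi T D rho z - rhoz Ph pi T D rho z) <= eta) ->
  2 * eta <= eps / 4 ->
  PiDP P T D rho (eps / 4) pistar ->
  (forall pi, PiDP P T D rho (eps / 4) pi -> Ret P pi T D Rw <= Ret P pistar T D Rw) ->
  plugin_guarantee D P Ph Rw rho T eps pistar.
Proof.
move=> he hR hr heta [pol_s fair_s] _.
have gap : forall x y u v, Rabs (x - y) <= Rabs (u - v) + Rabs (x - u) + Rabs (y - v).
  move=> x y u v; have -> : x - y = (u - v) + (x - u) - (y - v) by ring.
  apply: Rle_trans (Rabs_triang _ _) _; rewrite Rabs_Ropp; apply: Rplus_le_compat_r.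
  exact: Rabs_triang.
have fair_s_hat : PiDP Ph T D rho (eps / 2) pistar.
  split => //; apply: Rle_trans (gap _ _ (rhoz P pistar T D rho Zmaj) (rhoz P pistar T D rho Zmin)) _.
  have h1 := hr pistar Zmaj pol_s; have h2 := hr pistar Zmin pol_s.
  rewrite Rabs_minus_sym in h1; rewrite Rabs_minus_sym in h2; lra.
split; first by exists pistar.
move=> pihat [pol_h fair_h] hmax; split.
  split => //; apply: Rle_trans (gap _ _ (rhoz Ph pihat T D rho Zmaj) (rhoz Ph pihat T D rho Zmin)) _.
  have h1 := hr pihat Zmaj pol_h; have h2 := hr pihat Zmin pol_h; lra.
have h1 := hR pistar pol_s; have h2 := hR pihat pol_h; have h3 := hmax pistar fair_s_hat.
move: h1 h2; rewrite /Rabs; do 2 case: Rcase_abs => ?; lra.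
Qed.

(* When eps >= 4 Rmax the constraints and the optimality gap are vacuous:
   group rewards and returns are bounded by Rmax in every model. *)
Lemma large_eps_conclusion {St A : finType} (D : bool * St -> R)
    (P Ph : bool * St -> A -> bool * St -> R) (Rw rho : bool * St -> A -> R) (T : nat)
    (Rmax eps : R) (pistar : bool * St -> A -> R) :
  is_dist D -> is_kernel P -> is_kernel Ph -> (1 <= T)%N ->
  0 < pz D Zmaj -> 0 < pz D Zmin ->
  (forall s a, Rabs (Rw s a) <= Rmax) -> (forall s a, Rabs (rho s a) <= Rmax) ->
  0 < Rmax -> 4 * Rmax <= eps -> PiDP P T D rho (eps / 4) pistar ->
  plugin_guarantee D P Ph Rw rho T eps pistar.
Proof.
move=> hD hP hPh hT hmaj hmin hRw hrho hR he [pol_s _].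
have fair_gap : forall X pi, is_kernel X -> is_policy pi ->
    Rabs (rhoz X pi T D rho Zmaj - rhoz X pi T D rho Zmin) <= 2 * Rmax.
  move=> X pi hX hpi; apply: Rle_trans (Rabs_triang _ _) _; rewrite Rabs_Ropp.
  have := rhoz_bound D X rho pi T Rmax Zmaj hD hmaj hX hpi hT hrho.
  have := rhoz_bound D X rho pi T Rmax Zmin hD hmin hX hpi hT hrho; lra.
split.
  exists pistar; split => //.
  by have h := fair_gap _ _ hPh pol_s; lra.
move=> pihat [pol_h _] _; split.
  split => //.
  by have h := fair_gap _ _ hP pol_h; lra.
have := Ret_bound P pistar T D Rw Rmax hP pol_s hD hT hRw.
have := Ret_bound P pihat T D Rw Rmax hP pol_h hD hT hRw.
move: (Ret P pistar T D Rw) (Ret P pihat T D Rw) => x y; rewrite /Rabs.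
do 2 case: Rcase_abs => ?; lra.
Qed.

Section PathSum.
Variables (S : finType) (D : S -> R) (K : nat -> S -> S -> R).

Fixpoint chain_marg (n : nat) : S -> R :=
  match n with
  | O => D
  | n'.+1 => fun y => sumR (fun x => chain_marg n' x * K n' x y)
  end.

Definition path_weight {n} (f : {ffun 'I_n.+1 -> S}) : R :=
  D (f ord0) * \big[Rmult/R1]_(t < n) K t (f (inord t)) (f (inord t.+1)).

Definition ffun_snoc {n} (f : {ffun 'I_n.+1 -> S}) (x : S) : {ffun 'I_n.+2 -> S} :=
  [ffun i : 'I_n.+2 => if (i < n.+1)%N then f (inord i) else x].

Definition ffun_unsnoc {n} (g : {ffun 'I_n.+2 -> S}) : {ffun 'I_n.+1 -> S} * S :=
  ([ffun j : 'I_n.+1 => g (inord j)], g ord_max).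

Lemma sumR_snoc n (F : {ffun 'I_n.+2 -> S} -> R) :
  sumR F = sumR (fun f => sumR (fun x => F (ffun_snoc f x))).
Proof.
rewrite /sumR pair_big /=.
rewrite (reindex (fun p : {ffun 'I_n.+1 -> S} * S => ffun_snoc p.1 p.2)) //.
apply: onW_bij; exists (@ffun_unsnoc n).
- move=> [f x]; rewrite /ffun_unsnoc /ffun_snoc; congr pair.
  + apply/ffunP => j; rewrite !ffunE inordK; last exact: (ltn_trans (ltn_ord j)).
    by rewrite ltn_ord; congr (f _); apply: val_inj; rewrite /= inordK.
  + by rewrite ffunE /= ltnn.
- move=> g; apply/ffunP => i; rewrite /ffun_unsnoc /ffun_snoc !ffunE /=.
  case: ifP => hi.
  + congr (g _); apply: val_inj => /=.
    have hi' : (inord i : 'I_n.+1) = i :> nat by rewrite inordK.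
    by rewrite inordK hi' //; exact: (ltn_trans (ltn_ord _)).
  + congr (g _); apply: val_inj => /=; apply/eqP; rewrite eqn_leq leqNgt hi /=.
    exact: (ltn_ord i).
Qed.

Lemma ffun_snoc_val n (f : {ffun 'I_n.+1 -> S}) x i :
  (i < n.+1)%N -> ffun_snoc f x (inord i) = f (inord i).
Proof. by move=> hi; rewrite /ffun_snoc ffunE inordK ?hi //; exact: ltnW. Qed.

Lemma ffun_snoc_last n (f : {ffun 'I_n.+1 -> S}) x : ffun_snoc f x (inord n.+1) = x.
Proof. by rewrite /ffun_snoc ffunE inordK // ltnn. Qed.

Lemma path_weight_snoc n (f : {ffun 'I_n.+1 -> S}) x :
  path_weight (ffun_snoc f x) = path_weight f * K n (f ord_max) x.
Proof.
rewrite /path_weight big_ord_recr /=.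
have -> : ffun_snoc f x ord0 = f ord0.
  have -> : (ord0 : 'I_n.+2) = inord 0 by apply: val_inj; rewrite /= inordK.
  by rewrite ffun_snoc_val //; congr (f _); apply: val_inj; rewrite /= inordK.
have -> : f ord_max = f (inord n) by congr (f _); apply: val_inj; rewrite /= inordK.
rewrite ffun_snoc_val // ffun_snoc_last.
rewrite (eq_bigr (fun t : 'I_n => K t (f (inord t)) (f (inord t.+1)))); first by ring.
move=> t _; rewrite (ffun_snoc_val _ _ _ t); last exact: (ltn_trans (ltn_ord t)).
by rewrite ffun_snoc_val //; exact: (ltn_ord t).
Qed.

Lemma sumR_ffun1 (F : {ffun 'I_1 -> S} -> R) : sumR F = sumR (fun x => F [ffun _ => x]).
Proof.
rewrite /sumR (reindex (fun x : S => [ffun _ : 'I_1 => x])) //.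
apply: onW_bij; exists (fun f : {ffun 'I_1 -> S} => f ord0).
- by move=> x; rewrite ffunE.
- by move=> f; apply/ffunP => i; rewrite ffunE; congr (f _); apply: val_inj; case: i => -[].
Qed.

Lemma path_sum n (phi : S -> R) :
  sumR (fun f : {ffun 'I_n.+1 -> S} => path_weight f * phi (f ord_max)) =
  sumR (fun y => chain_marg n y * phi y).
Proof.
elim: n phi => [|n IH] phi.
  by rewrite sumR_ffun1; apply: eq_sumR => y; rewrite /path_weight big_ord0 !ffunE /=; ring.
rewrite sumR_snoc.
rewrite (@eq_sumR _ _ (fun f => path_weight f * sumR (fun x => K n (f ord_max) x * phi x))); last first.
  move=> f; rewrite -sumR_scal; apply: eq_sumR => x.
  by rewrite path_weight_snoc /ffun_snoc ffunE /= ltnn Rmult_assoc.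
rewrite (IH (fun y => sumR (fun x => K n y x * phi x))) /=.
rewrite sumR_mul_swap; apply: eq_sumR => x; rewrite -sumR_scar.
by apply: eq_sumR => y; ring.
Qed.

Lemma chain_marg_step n : sumR (chain_marg n.+1) = sumR (fun x => chain_marg n x * sumR (K n x)).
Proof. by rewrite /= sumR_swap; apply: eq_sumR => x; rewrite sumR_scal. Qed.

Lemma chain_marg_ge0 n : (forall x, 0 <= D x) -> (forall t x y, 0 <= K t x y) ->
  forall y, 0 <= chain_marg n y.
Proof.
move=> hD hK; elim: n => [|n IH] y //=.
by apply: sumR_ge0 => x; apply: Rmult_le_pos; [exact: IH|exact: hK].
Qed.

Lemma chain_marg_sub n : (forall x, 0 <= D x) -> (forall t x y, 0 <= K t x y) ->
  (forall t x, sumR (K t x) <= 1) -> sumR (chain_marg n) <= sumR D.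
Proof.
move=> hD hK h1; elim: n => [|n IH]; first exact: Rle_refl.
rewrite chain_marg_step; apply: Rle_trans IH.
apply: sumR_le => x; have := chain_marg_ge0 n hD hK x; have := h1 n x; nra.
Qed.

Lemma chain_marg_stoch m n : (forall t x, (m <= t)%N -> sumR (K t x) = 1) ->
  sumR (chain_marg (m + n)) = sumR (chain_marg m).
Proof.
move=> h1; elim: n => [|n IH]; first by rewrite addn0.
by rewrite addnS chain_marg_step -IH; apply: eq_sumR => x; rewrite h1 ?leq_addr // Rmult_1_r.
Qed.

End PathSum.
Arguments chain_marg {S}. Arguments path_weight {S}.

(* A multiplicative functional
   prod_t h t (s_t, a_t, s_{t+1}) of the episode has expectation the total
   mass of the chain with tilted weights [tilted_kernel h]. *)

Section Episode.
Variables (S A : finType) (T : nat) (D : S -> R) (pi0 : S -> A -> R) (P : S -> A -> S -> R).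

Definition tilted_kernel (h : nat -> S * A * S -> R) (t : nat) (x y : S) : R :=
  sumR (fun a => pi0 x a * P x a y * h t (x, a, y)).

Lemma ep_sum (h : nat -> S * A * S -> R) :
  sumR (fun e : episode S A T =>
    ep_prob D pi0 P e * \big[Rmult/R1]_(t < T) h t (ep_tuple e t)) =
  sumR (chain_marg D (tilted_kernel h) T).
Proof.
rewrite sumR_pair.
rewrite (@eq_sumR _ _ (fun y => chain_marg D (tilted_kernel h) T y * 1)); last by move=> y; ring.
rewrite -path_sum; apply: eq_sumR => f.
rewrite (@eq_sumR _ _ (fun g : {ffun 'I_T -> A} => D (f ord0) *
   \big[Rmult/R1]_(t < T) (pi0 (f (inord t)) (g t) * P (f (inord t)) (g t) (f (inord t.+1))
        * h t (f (inord t), g t, f (inord t.+1))))); last first.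
  move=> g; rewrite /ep_prob Rmult_assoc prodR_split; congr (_ * _).
  apply: eq_bigr => t _; rewrite /ep_tuple /=.
  have -> : widen_ord (leqnSn T) t = inord t :> 'I_T.+1.
    by apply: val_inj; rewrite /= inordK // ltnW // ltnS.
  have -> : lift ord0 t = inord t.+1 :> 'I_T.+1 by apply: val_inj; rewrite /= inordK // ltnS.
  by [].
by rewrite sumR_scal /path_weight Rmult_1_r /tilted_kernel /sumR bigA_distr_bigA.
Qed.

Hypotheses (hD : is_dist D) (hP : is_kernel P) (hpi : is_policy pi0).

Lemma ep_prob_ge0 (e : episode S A T) : 0 <= ep_prob D pi0 P e.
Proof.
apply: Rmult_le_pos; first exact: hD.1.
by apply: prodR_ge0 => t _ /=; apply: Rmult_le_pos; [exact: (hpi _).1|exact: (hP _ _).1].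
Qed.

Lemma chain_marg_untilted (h : nat -> S * A * S -> R) m :
  (forall t z, (t < m)%N -> h t z = 1) ->
  forall n y, (n <= m)%N -> chain_marg D (tilted_kernel h) n y = mu_t P pi0 D n y.
Proof.
move=> h1; elim=> [|n IH] y hn //=.
apply: eq_sumR => x; rewrite IH ?(ltnW hn) //; congr (_ * _).
by apply: eq_sumR => a; rewrite h1 // Rmult_1_r.
Qed.

Lemma tilted_row1 (h : nat -> S * A * S -> R) t x : (forall z, h t z = 1) ->
  sumR (tilted_kernel h t x) = 1.
Proof.
move=> h1; rewrite -(Ppi_row P pi0 x hP hpi); apply: eq_sumR => y.
by apply: eq_sumR => a; rewrite h1 Rmult_1_r.
Qed.

Lemma ep_total : sumR (fun e : episode S A T => ep_prob D pi0 P e) = 1.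
Proof.
have := ep_sum (fun _ _ => 1).
rewrite (@eq_sumR _ _ (fun e => ep_prob D pi0 P e)); last by move=> e; rewrite big1 ?Rmult_1_r.
move=> ->; transitivity (sumR (mu_t P pi0 D T)); last exact: (mu_t_dist P pi0 D T hP hpi hD).2.
by apply: eq_sumR => y; apply: (chain_marg_untilted (fun _ _ => 1) T).
Qed.

Lemma ep_marg (t0 : 'I_T) s0 a0 :
  sumR (fun e : episode S A T => ep_prob D pi0 P e * indR ((ep_tuple e t0).1 == (s0, a0))) =
  mu_t P pi0 D t0 s0 * pi0 s0 a0.
Proof.
pose h := fun (t : nat) (z : S * A * S) => if t == t0 then indR (z.1 == (s0, a0)) else 1.
have := ep_sum h.
rewrite (@eq_sumR _ _ (fun e => ep_prob D pi0 P e * indR ((ep_tuple e t0).1 == (s0, a0)))); last first.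
  move=> e; congr (_ * _); rewrite (bigD1 t0) //= /h eqxx big1 ?Rmult_1_r // => t ht.
  by rewrite ifF //; apply/negbTE.
move=> ->.
have E : T = (t0.+1 + (T - t0.+1))%N by rewrite subnKC.
rewrite [X in sumR (chain_marg _ _ X)]E chain_marg_stoch; last first.
  move=> t x ht; apply: tilted_row1 => z; rewrite /h ifF //; apply/negbTE.
  by rewrite neq_ltn ltnNge ht orbT.
rewrite chain_marg_step (@sumR_pick _ _ s0); last first.
  move=> x hx; rewrite (@eq_sumR _ _ (fun _ => 0)) ?sumR_const ?Rmult_0_r; first ring.
  move=> y; rewrite /tilted_kernel (@eq_sumR _ _ (fun _ => 0)) ?sumR_const; first ring.
  by move=> a; rewrite /h eqxx /indR /= xpair_eqE (negbTE hx) /=; ring.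
rewrite (chain_marg_untilted h t0) //; last first.
  by move=> t z ht; rewrite /h ifF //; apply/negbTE; rewrite neq_ltn ht.
congr (_ * _); rewrite /tilted_kernel sumR_swap (@sumR_pick _ _ a0).
  rewrite /h eqxx /indR /= !eqxx /=.
  rewrite (@eq_sumR _ _ (fun y => pi0 s0 a0 * P s0 a0 y)); last by move=> y; ring.
  by rewrite sumR_scal (hP s0 a0).2; ring.
move=> a ha; rewrite (@eq_sumR _ _ (fun _ => 0)) ?sumR_const; first ring.
by move=> y; rewrite /h eqxx /indR /= xpair_eqE eqxx (negbTE ha) /=; ring.
Qed.

Lemma ep_supermartingale (g : S * A * S -> R) : (forall z, 0 <= g z) ->
  (forall x, sumR (fun a => pi0 x a * sumR (fun y => P x a y * g (x, a, y))) <= 1) ->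
  sumR (fun e : episode S A T => ep_prob D pi0 P e * \big[Rmult/R1]_(t < T) g (ep_tuple e t)) <= 1.
Proof.
move=> g0 g1; rewrite (ep_sum (fun _ z => g z)) -hD.2.
apply: chain_marg_sub; first exact: hD.1.
- move=> t x y; apply: sumR_ge0 => a; apply: Rmult_le_pos; last exact: g0.
  by apply: Rmult_le_pos; [exact: (hpi x).1|exact: (hP x a).1].
- move=> t x; apply: Rle_trans (g1 x); rewrite /tilted_kernel sumR_swap; apply: Req_le.
  by apply: eq_sumR => a; rewrite -sumR_scal; apply: eq_sumR => y; ring.
Qed.

End Episode.
Arguments tilted_kernel {S A}.
Arguments ep_prob_ge0 {S A T D pi0 P}. Arguments ep_supermartingale {S A T D pi0 P}.

Section Dataset.
Variables (S A : finType) (T N : nat) (D : S -> R) (pi0 : S -> A -> R) (P : S -> A -> S -> R).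
Hypotheses (hD : is_dist D) (hP : is_kernel P) (hpi : is_policy pi0).

Lemma data_prod (F : episode S A T -> R) :
  sumR (fun d : dataset S A T N => data_prob D pi0 P d * \big[Rmult/R1]_(i < N) F (d i)) =
  (sumR (fun e => ep_prob D pi0 P e * F e)) ^ N.
Proof.
rewrite -prodR_const /sumR bigA_distr_bigA; apply: eq_bigr => d _.
by rewrite /data_prob prodR_split.
Qed.

Lemma data_total : sumR (fun d : dataset S A T N => data_prob D pi0 P d) = 1.
Proof.
have := data_prod (fun _ => 1).
rewrite (@eq_sumR _ _ (fun e => ep_prob D pi0 P e)); last by move=> e; ring.
rewrite ep_total // pow1 => <-; apply: eq_sumR => d; rewrite big1 ?Rmult_1_r //.
Qed.

Lemma data_prob_ge0 (d : dataset S A T N) : 0 <= data_prob D pi0 P d.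
Proof. by apply: prodR_ge0 => i _; exact: ep_prob_ge0. Qed.

End Dataset.

Lemma centered_indicator_mgf (S : finType) (q : S -> R) s' sg lam :
  is_dist q -> sg * sg = 1 -> 0 <= lam <= 1/2 ->
  sumR (fun y => q y * exp (sg * lam * (indR (y == s') - q s'))) <= exp (lam ^ 2 / 2).
Proof.
move=> [q0 q1] hsg hlam; set p := q s'.
have hp : 0 <= p <= 1 by split; [exact: q0|rewrite -q1; exact: sumR_term].
have hsg' : -1 <= sg <= 1 by nra.
set u := fun y => sg * lam * (indR (y == s') - p).
apply: Rle_trans (_ : sumR (fun y => q y * (1 + u y + 2 * u y ^ 2)) <= _).
  apply: sumR_le => y; apply: Rmult_le_compat_l; first exact: q0.
  apply: exp_quad_bound; rewrite /u; have := indR_01 (y == s'); move: (indR _) => iy hi.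
  have hw : sg * (iy - p) <= 1 by nra.
  nra.
have second_moment : sumR (fun y => q y * (1 + u y + 2 * u y ^ 2)) =
    1 + 2 * lam ^ 2 * (p * (1 - p)).
  rewrite (@eq_sumR _ _ (fun y => q y * (1 - sg * lam * p + 2 * lam ^ 2 * p ^ 2)
       + q y * indR (y == s') * (sg * lam + 2 * lam ^ 2 * (1 - 2 * p)))); last first.
    move=> y; rewrite /u; have := indR_sq (y == s'); move: (indR _) => iy hi.
    have -> : (sg * lam * (iy - p)) ^ 2 = (sg * sg) * lam ^ 2 * (iy * iy - 2 * p * iy + p ^ 2)
      by ring.
    by rewrite hsg hi; ring.
  by rewrite sumR_plus !sumR_scar sumR_ind q1 -/p; ring.
rewrite second_moment.
have hpp : p * (1 - p) <= 1/4 by have := Rle_0_sqr (p - 1/2); rewrite /Rsqr; lra.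
have := exp_ineq1_le (lam ^ 2 / 2); nra.
Qed.

Section Concentration.
Variables (S A : finType) (T : nat) (D : S -> R) (pi0 : S -> A -> R) (P : S -> A -> S -> R).
Variables (s : S) (a : A) (s' : S).

Definition visits (e : episode S A T) : R :=
  sumR (fun t : 'I_T => indR ((ep_tuple e t).1 == (s, a))).

Definition dev_step (sg lam : R) (z : S * A * S) : R :=
  indR (z.1 == (s, a)) * (sg * lam * (indR (z.2 == s') - P s a s') - lam ^ 2 / 2).

Definition dev_score (sg lam : R) (e : episode S A T) : R :=
  sumR (fun t : 'I_T => dev_step sg lam (ep_tuple e t)).

Hypotheses (hD : is_dist D) (hP : is_kernel P) (hpi : is_policy pi0) (hT : (1 <= T)%N).

Lemma visits_bounds e : 0 <= visits e <= INR T.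
Proof.
split; first by apply: sumR_ge0 => t; exact: (indR_01 _).1.
rewrite -(card_ord T) -[INR _]Rmult_1_r -sumR_const; apply: sumR_le => t; exact: (indR_01 _).2.
Qed.

Lemma visits_mean : sumR (fun e => ep_prob D pi0 P e * visits e) = INR T * Lam P pi0 T D s a.
Proof.
have hT' : 0 < INR T by apply: lt_0_INR; apply/ltP.
rewrite (@eq_sumR _ _ (fun e => sumR (fun t : 'I_T =>
   ep_prob D pi0 P e * indR ((ep_tuple e t).1 == (s, a))))); last by move=> e; rewrite sumR_scal.
rewrite sumR_swap (@eq_sumR _ _ (fun t : 'I_T => mu_t P pi0 D t s * pi0 s a)); last first.
  by move=> t; rewrite ep_marg.
by rewrite sumR_scar /Lam /mubar -/(sumR _); field; lra.
Qed.

Lemma visits_exp_moment :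
  sumR (fun e => ep_prob D pi0 P e * exp (- (visits e / (2 * INR T)))) <=
  1 - Lam P pi0 T D s a / 4.
Proof.
have hT' : 0 < INR T by apply: lt_0_INR; apply/ltP.
apply: Rle_trans (_ : sumR (fun e => ep_prob D pi0 P e * 1
   - / (4 * INR T) * (ep_prob D pi0 P e * visits e)) <= _).
  apply: sumR_le => e; have hp := ep_prob_ge0 hD hP hpi e.
  have [c0 c1] := visits_bounds e.
  have hy : 0 <= visits e / (2 * INR T) <= 1.
    split; first by apply: Rmult_le_pos => //; apply/Rlt_le/Rinv_0_lt_compat; lra.
    apply: (Rmult_le_reg_r (2 * INR T)); first lra.
    rewrite /Rdiv Rmult_assoc Rinv_l; lra.
  have hb := exp_neg_le _ hy.
  have -> : / (4 * INR T) * (ep_prob D pi0 P e * visits e) =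
    ep_prob D pi0 P e * (visits e / (2 * INR T) / 2) by field; lra.
  nra.
rewrite -sumR_minus sumR_scal visits_mean.
rewrite (@eq_sumR _ _ (fun e => ep_prob D pi0 P e)); last by move=> e; ring.
by rewrite ep_total //; apply: Req_le; field; lra.
Qed.

Lemma dev_exp_moment sg lam : sg * sg = 1 -> 0 <= lam <= 1/2 ->
  sumR (fun e => ep_prob D pi0 P e * exp (dev_score sg lam e)) <= 1.
Proof.
move=> hsg hlam.
rewrite (@eq_sumR _ _ (fun e => ep_prob D pi0 P e *
   \big[Rmult/R1]_(t < T) exp (dev_step sg lam (ep_tuple e t)))); last first.
  by move=> e; rewrite /dev_score /sumR bigR_exp.
apply: (ep_supermartingale hD hP hpi (fun z => exp (dev_step sg lam z))).
  by move=> z; apply/Rlt_le/exp_pos.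
move=> x; rewrite -(hpi x).2; apply: sumR_le => b.
rewrite -[X in _ <= X]Rmult_1_r; apply: Rmult_le_compat_l; first exact: (hpi x).1.
case: (boolP ((x, b) == (s, a))) => hxb.
- move/eqP: hxb => [-> ->].
  rewrite (@eq_sumR _ _ (fun y => exp (- (lam ^ 2 / 2)) *
     (P s a y * exp (sg * lam * (indR (y == s') - P s a s'))))); last first.
    by move=> y; rewrite /dev_step /= eqxx Rmult_1_l /Rminus exp_plus; ring.
  rewrite sumR_scal; have := centered_indicator_mgf _ _ s' _ _ (hP s a) hsg hlam.
  have h1 : exp (- (lam ^ 2 / 2)) * exp (lam ^ 2 / 2) = 1.
    by rewrite -exp_plus Rplus_opp_l exp_0.
  have := exp_pos (- (lam ^ 2 / 2)); nra.
- rewrite (@eq_sumR _ _ (fun y => P x b y)); last first.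
    by move=> y; rewrite /dev_step /= (negbTE hxb) /= Rmult_0_l exp_0 Rmult_1_r.
  by rewrite (hP x b).2; lra.
Qed.

End Concentration.
Arguments visits {S A T}. Arguments dev_step {S A}. Arguments dev_score {S A T}.

Section DatasetConcentration.
Variables (S A : finType) (T N : nat) (D : S -> R) (pi0 : S -> A -> R) (P : S -> A -> S -> R).
Hypotheses (hD : is_dist D) (hP : is_kernel P) (hpi : is_policy pi0) (hT : (1 <= T)%N).

Lemma count_sa_visits (d : dataset S A T N) s a :
  INR (count_sa d s a) = sumR (fun i => visits s a (d i)).
Proof.
rewrite /count_sa bigR_INR; apply: eq_bigr => i _; rewrite bigR_INR; apply: eq_bigr => t _.
by rewrite INR_indR.
Qed.

Lemma count_dev_score (d : dataset S A T N) s a s' sg lam :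
  sumR (fun i => dev_score P s a s' sg lam (d i)) =
  sg * lam * (INR (count_sas d s a s') - P s a s' * INR (count_sa d s a))
  - lam ^ 2 / 2 * INR (count_sa d s a).
Proof.
set vis := fun i (t : 'I_T) => indR ((ep_tuple (d i) t).1 == (s, a)).
set nxt := fun i (t : 'I_T) => indR ((ep_tuple (d i) t).2 == s').
have -> : INR (count_sas d s a s') = sumR (fun i => sumR (fun t => vis i t * nxt i t)).
  rewrite /count_sas bigR_INR; apply: eq_bigr => i _.
  rewrite bigR_INR; apply: eq_bigr => t _; rewrite INR_indR /vis /nxt.
  move: (ep_tuple (d i) t) => -[[x y] z] /=; rewrite xpair_eqE.
  by case: (_ == _); case: (_ == _) => /=; ring.
rewrite count_sa_visits.
rewrite (@eq_sumR _ _ (fun i => sg * lam * sumR (fun t => vis i t * nxt i t)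
   + (- (sg * lam * P s a s') - lam ^ 2 / 2) * visits s a (d i))); last first.
  move=> i; rewrite /visits /dev_score -!sumR_scal -sumR_plus; apply: eq_sumR => t.
  by rewrite /dev_step /vis /nxt; ring.
by rewrite sumR_plus !sumR_scal; ring.
Qed.

Lemma visits_tail_moment s a k :
  sumR (fun d : dataset S A T N => data_prob D pi0 P d *
     exp ((k - INR (count_sa d s a)) / (2 * INR T))) <=
  exp (k / (2 * INR T)) * (1 - Lam P pi0 T D s a / 4) ^ N.
Proof.
have hT' : 0 < INR T by apply: lt_0_INR; apply/ltP.
rewrite (@eq_sumR _ _ (fun d => exp (k / (2 * INR T)) * (data_prob D pi0 P d *
   \big[Rmult/R1]_(i < N) exp (- (visits s a (d i) / (2 * INR T)))))); last first.
  move=> d; rewrite -bigR_exp -/(sumR _).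
  have -> : sumR (fun i => - (visits s a (d i) / (2 * INR T))) =
      - (/ (2 * INR T)) * INR (count_sa d s a).
    rewrite (@eq_sumR _ _ (fun i => - / (2 * INR T) * visits s a (d i))); last first.
      by move=> i; rewrite /Rdiv; ring.
    by rewrite sumR_scal count_sa_visits.
  have -> : (k - INR (count_sa d s a)) / (2 * INR T) =
    k / (2 * INR T) + - / (2 * INR T) * INR (count_sa d s a) by field; lra.
  by rewrite exp_plus; ring.
rewrite sumR_scal (@data_prod S A T N D pi0 P (fun e => exp (- (visits s a e / (2 * INR T))))).
apply: Rmult_le_compat_l; first exact/Rlt_le/exp_pos.
apply: pow_incr; split; last exact: visits_exp_moment.
by apply: sumR_ge0 => e; apply: Rmult_le_pos; [exact: ep_prob_ge0|apply/Rlt_le/exp_pos].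
Qed.

Lemma dev_tail_moment s a s' sg lam : sg * sg = 1 -> 0 <= lam <= 1/2 ->
  sumR (fun d : dataset S A T N => data_prob D pi0 P d *
     exp (sumR (fun i => dev_score P s a s' sg lam (d i)))) <= 1.
Proof.
move=> hsg hlam.
rewrite (@eq_sumR _ _ (fun d => data_prob D pi0 P d *
   \big[Rmult/R1]_(i < N) exp (dev_score P s a s' sg lam (d i)))); last first.
  by move=> d; rewrite -bigR_exp.
rewrite (@data_prod S A T N D pi0 P (fun e => exp (dev_score P s a s' sg lam e))) -(pow1 N). apply: pow_incr; split; last exact: dev_exp_moment.
by apply: sumR_ge0 => e; apply: Rmult_le_pos; [exact: ep_prob_ge0|apply/Rlt_le/exp_pos].
Qed.

End DatasetConcentration.

(* The two signs used to control both tails of a deviation. *)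
Definition sgn (b : bool) : R := if b then 1 else -1.

Lemma sgn_sq b : sgn b * sgn b = 1.
Proof. by case: b => /=; ring. Qed.

Section GoodData.
Variables (S A : finType) (T N : nat) (D : S -> R) (pi0 : S -> A -> R) (P : S -> A -> S -> R).

Definition good_data (lam k : R) (d : dataset S A T N) : bool :=
  [forall s, forall a, Rleb k (INR (count_sa d s a)) &&
     [forall s', Rleb (Rabs (INR (count_sas d s a s') - P s a s' * INR (count_sa d s a)))
                      (lam * INR (count_sa d s a))]].

(* Exponential majorant of the failure of the conditions at (s, a): one
   lower-tail term for the visits, two deviation terms per next state. *)
Definition visit_term (k : R) (d : dataset S A T N) (s : S) (a : A) : R :=
  exp ((k - INR (count_sa d s a)) / (2 * INR T)).

Definition dev_term (lam k : R) (d : dataset S A T N) (s : S) (a : A) (s' : S) (b : bool) : R :=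
  exp (sumR (fun i => dev_score P s a s' (sgn b) lam (d i)) - lam ^ 2 * k / 2).

Definition pair_majorant (lam k : R) (d : dataset S A T N) (s : S) (a : A) : R :=
  visit_term k d s a + sumR (fun s' => sumR (fun b => dev_term lam k d s a s' b)).

Definition bad_majorant (lam k : R) (d : dataset S A T N) : R :=
  sumR (fun s => sumR (fun a => pair_majorant lam k d s a)).

Lemma pair_majorant_ge0 lam k d s a : 0 <= pair_majorant lam k d s a.
Proof.
apply: Rplus_le_le_0_compat; first exact/Rlt_le/exp_pos.
by apply: sumR_ge0 => s'; apply: sumR_ge0 => b; exact/Rlt_le/exp_pos.
Qed.

Hypothesis hT : (1 <= T)%N.

Lemma pair_majorant_ge1 lam k d s a : 0 <= lam ->
  ~~ (Rleb k (INR (count_sa d s a)) &&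
      [forall s', Rleb (Rabs (INR (count_sas d s a s') - P s a s' * INR (count_sa d s a)))
                       (lam * INR (count_sa d s a))]) ->
  1 <= pair_majorant lam k d s a.
Proof.
move=> hlam h; have hT' : 0 < INR T by apply: lt_0_INR; apply/ltP.
have pos : forall x, 0 <= exp x by move=> x; apply/Rlt_le/exp_pos.
have hdev : forall s' b, 0 <= dev_term lam k d s a s' b by move=> *; exact: pos.
have hE1 : 0 <= visit_term k d s a by exact: pos.
have hE2 : 0 <= sumR (fun s' => sumR (fun b => dev_term lam k d s a s' b)).
  by apply: sumR_ge0 => s'; exact: sumR_ge0.
rewrite /pair_majorant.
set C := INR (count_sa d s a) in h *.
have hC : 0 <= C := pos_INR _.
case: (Rle_dec k C) => hk; last first.
  suff : 1 <= visit_term k d s a by lra.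
  move/Rnot_le_lt: hk => hk; rewrite /visit_term -/C; apply: exp_ge1.
  by apply: Rmult_le_pos; [lra|apply/Rlt_le/Rinv_0_lt_compat; lra].
move: h; rewrite negb_and => /orP [/RlebP //|/forallPn [s' /RlebP /Rnot_le_lt hX]].
set X := INR (count_sas d s a s') - P s a s' * C in hX.
have [b hb] : exists b, lam * C < sgn b * X.
  case: (Rle_dec 0 X) => hx.
  - by exists true; rewrite /sgn; rewrite Rabs_right in hX; lra.
  - by exists false; rewrite /sgn; rewrite Rabs_left in hX; lra.
have : 1 <= dev_term lam k d s a s' b.
  apply: exp_ge1; rewrite count_dev_score -/C -/X.
  have : lam * (lam * C) <= lam * (sgn b * X) by apply: Rmult_le_compat_l => //; lra.
  have : 0 <= lam ^ 2 * (C - k) by apply: Rmult_le_pos; [apply: pow2_ge_0|lra].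
  nra.
have := sumR_term (fun b => dev_term lam k d s a s' b) b (hdev s').
have := sumR_term (fun s' => sumR (fun b => dev_term lam k d s a s' b)) s'
  (fun s'' => sumR_ge0 _ (hdev s'')).
lra.
Qed.

Lemma bad_majorant_ge1 lam k d : 0 <= lam -> ~~ good_data lam k d -> 1 <= bad_majorant lam k d.
Proof.
move=> hlam /forallPn [s /forallPn [a h]].
apply: Rle_trans (pair_majorant_ge1 _ _ _ _ _ hlam h) _.
apply: Rle_trans (sumR_term (fun a => pair_majorant lam k d s a) a _) _.
  by move=> b; exact: pair_majorant_ge0.
apply: (sumR_term (fun s => sumR (fun a => pair_majorant lam k d s a))) => s'.
by apply: sumR_ge0 => b; exact: pair_majorant_ge0.
Qed.

Hypotheses (hD : is_dist D) (hP : is_kernel P) (hpi : is_policy pi0).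

Lemma bad_majorant_mass lam k l0 : 0 <= lam <= 1/2 -> (forall s a, l0 <= Lam P pi0 T D s a) ->
  sumR (fun d : dataset S A T N => data_prob D pi0 P d * bad_majorant lam k d) <=
  INR #|S| * (INR #|A| * (exp (k / (2 * INR T)) * (1 - l0 / 4) ^ N +
     INR #|S| * (INR 2 * exp (- (lam ^ 2 * k / 2))))).
Proof.
move=> hlam hl0; rewrite -!sumR_const.
rewrite /bad_majorant sumR_mul_swap; apply: sumR_le => s.
rewrite sumR_mul_swap; apply: sumR_le => a.
rewrite /pair_majorant (@eq_sumR _ _ (fun d =>
   data_prob D pi0 P d * visit_term k d s a +
   data_prob D pi0 P d * sumR (fun s' => sumR (fun b => dev_term lam k d s a s' b)))); last first.
  by move=> d; rewrite Rmult_plus_distr_l.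
rewrite sumR_plus; apply: Rplus_le_compat.
  apply: Rle_trans (visits_tail_moment _ _ _ N D pi0 P hD hP hpi hT s a k) _.
  apply: Rmult_le_compat_l; first exact/Rlt_le/exp_pos.
  by apply: pow_incr; have := hl0 s a; have := Lam_le1 _ _ _ _ _ _ s a hP hpi hD hT; lra.
rewrite sumR_mul_swap; apply: sumR_le => s'.
rewrite sumR_mul_swap -{1}card_bool -sumR_const; apply: sumR_le => b.
rewrite (@eq_sumR _ _ (fun d => exp (- (lam ^ 2 * k / 2)) * (data_prob D pi0 P d *
   exp (sumR (fun i => dev_score P s a s' (sgn b) lam (d i)))))); last first.
  by move=> d; rewrite /dev_term /Rminus exp_plus [RHS]Rmult_comm Rmult_assoc.
rewrite sumR_scal -[X in _ <= X]Rmult_1_r; apply: Rmult_le_compat_l; first exact/Rlt_le/exp_pos.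
exact: dev_tail_moment (sgn_sq b) hlam.
Qed.

(* Markov-type bound: good datasets have probability at least one minus
   the expected majorant. *)
Lemma good_mass lam k l0 : 0 <= lam <= 1/2 -> (forall s a, l0 <= Lam P pi0 T D s a) ->
  1 - INR #|S| * (INR #|A| * (exp (k / (2 * INR T)) * (1 - l0 / 4) ^ N +
     INR #|S| * (INR 2 * exp (- (lam ^ 2 * k / 2))))) <=
  \big[Rplus/R0]_(d in [set d | good_data lam k d]) data_prob D pi0 P d.
Proof.
move=> hlam hl0; set G := [set d | good_data lam k d].
have hbad : \big[Rplus/R0]_(d | d \notin G) data_prob D pi0 P d <=
    \big[Rplus/R0]_(d | d \notin G) (data_prob D pi0 P d * bad_majorant lam k d).
  apply: bigR_le => d; rewrite inE => hd.
  have := bad_majorant_ge1 _ _ _ hlam.1 hd; have := data_prob_ge0 _ _ _ _ _ _ _ hD hP hpi d; nra.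
have hin : 0 <= \big[Rplus/R0]_(d in G) (data_prob D pi0 P d * bad_majorant lam k d).
  apply: bigR_ge0 => d _; apply: Rmult_le_pos; first exact: data_prob_ge0.
  by apply: sumR_ge0 => s; apply: sumR_ge0 => a; exact: pair_majorant_ge0.
have hm := bad_majorant_mass lam k l0 hlam hl0; have tot := data_total _ _ T N D pi0 P hD hP hpi.
have split_good : forall F : dataset S A T N -> R, sumR F =
   \big[Rplus/R0]_(d in G) F d + \big[Rplus/R0]_(d | d \notin G) F d.
  by move=> F; rewrite /sumR (bigID (fun d => d \in G)).
rewrite split_good in hm; rewrite split_good in tot; lra.
Qed.

Lemma good_Phat lam k (Q : S -> A -> S -> R) d s a s' : 0 < k -> good_data lam k d ->
  Rabs (Phat Q d s a s' - P s a s') <= lam.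
Proof.
move=> hk /forallP /(_ s) /forallP /(_ a) /andP [/RlebP hC /forallP /(_ s') /RlebP hX].
set C := INR (count_sa d s a) in hC hX.
have hC0 : 0 < C by lra.
rewrite /Phat; case: eqP => h0; first by move: hC0; rewrite /C h0 /=; lra.
rewrite -/C.
have -> : INR (count_sas d s a s') / C - P s a s' =
  (INR (count_sas d s a s') - P s a s' * C) / C by field; lra.
rewrite Rabs_mult Rabs_inv ?(Rabs_right C); try lra.
apply: (Rmult_le_reg_r C) => //; rewrite Rmult_assoc Rinv_l; lra.
Qed.

End GoodData.
Arguments good_data {S A T N}. Arguments good_mass {S A T N}. Arguments good_Phat {S A T N}.

Lemma log_level_pos (n m delta : R) : 2 <= n -> 1 <= m -> 0 < delta < 1 ->
  0 < ln (2 * n ^ 2 * m / delta).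
Proof.
move=> hn hm hd; rewrite -ln_1; apply: ln_increasing; first lra.
apply: (Rmult_lt_reg_r delta); first lra.
rewrite /Rdiv Rmult_assoc Rinv_l; last lra.
have : 4 <= n ^ 2 by nra.
nra.
Qed.

Lemma sample_size_pos (n m T l0 eps Rmax delta N : R) :
  2 <= n -> 1 <= m -> 1 <= T -> 0 < l0 -> 0 < eps -> 0 < Rmax -> 0 < delta < 1 ->
  128 * T ^ 2 * n ^ 2 * Rmax ^ 2 * ln (2 * n ^ 2 * m / delta) / (l0 ^ 2 * eps ^ 2) <= N ->
  0 < N.
Proof.
move=> hn hm hT hl0 he hR hd; apply: Rlt_le_trans.
have hL := log_level_pos _ _ _ hn hm hd.
apply: Rdiv_lt_0_compat; last by apply: Rmult_lt_0_compat; apply: pow_lt.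
by repeat apply: Rmult_lt_0_compat => //; try apply: pow_lt; lra.
Qed.

Lemma sample_size_exponents (n T l0 eps Rmax L N : R) :
  2 <= n -> 1 <= T -> 0 < l0 <= 1/2 -> 0 < eps -> eps < 4 * Rmax -> 0 < L ->
  128 * T ^ 2 * n ^ 2 * Rmax ^ 2 * L / (l0 ^ 2 * eps ^ 2) <= N ->
  L <= N * l0 / 8 /\ 2 * L <= (eps / (4 * T * n * Rmax)) ^ 2 * (N * T * l0 / 4) / 2.
Proof.
move=> hn hT [hl0 hl2] he he4 hL hN.
have hR : 0 < Rmax by lra.
have hq : 0 < l0 ^ 2 * eps ^ 2 by apply: Rmult_lt_0_compat; apply: pow_lt.
have hA : 128 * T ^ 2 * n ^ 2 * Rmax ^ 2 * L <= N * (l0 ^ 2 * eps ^ 2).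
  have := Rmult_le_compat_r _ _ _ (Rlt_le _ _ hq) hN.
  by rewrite /Rdiv Rmult_assoc Rinv_l ?Rmult_1_r //; lra.
have hTn : 4 <= T ^ 2 * n ^ 2.
  have hT2 : 1 <= T ^ 2 by nra.
  have hn2 : 4 <= n ^ 2 by nra.
  by have := Rmult_le_compat 1 (T ^ 2) 4 (n ^ 2); lra.
have hpos : 0 < T ^ 2 * n ^ 2 * Rmax ^ 2 * L.
  by repeat apply: Rmult_lt_0_compat => //; try apply: pow_lt; lra.
have hNl : 0 <= N * l0.
  suff : 0 < N by nra.
  by apply: (Rmult_lt_reg_r (l0 ^ 2 * eps ^ 2)) => //; lra.
have hhalf : N * (l0 ^ 2 * eps ^ 2) <= N * l0 * eps ^ 2 / 2.
  have : N * l0 * l0 <= N * l0 * (1 / 2) by apply: Rmult_le_compat_l.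
  have : 0 <= eps ^ 2 by apply: pow2_ge_0.
  nra.
split.
- have h1 : 32 * eps ^ 2 <= 128 * T ^ 2 * n ^ 2 * Rmax ^ 2.
    have : 128 * 4 * Rmax ^ 2 <= 128 * (T ^ 2 * n ^ 2) * Rmax ^ 2.
      by apply: Rmult_le_compat_r; [apply: pow2_ge_0|lra].
    nra.
  have h2 : 32 * eps ^ 2 * L <= N * l0 * eps ^ 2 / 2.
    have : 32 * eps ^ 2 * L <= 128 * T ^ 2 * n ^ 2 * Rmax ^ 2 * L.
      by apply: Rmult_le_compat_r; lra.
    lra.
  apply: (Rmult_le_reg_r (eps ^ 2)); first exact: pow_lt.
  lra.
- have eR : (eps / (4 * T * n * Rmax)) ^ 2 * (N * T * l0 / 4) / 2 =
      N * l0 * eps ^ 2 / (128 * T * n ^ 2 * Rmax ^ 2) by field; lra.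
  have hd : 0 < 128 * T * n ^ 2 * Rmax ^ 2.
    by repeat apply: Rmult_lt_0_compat => //; try apply: pow_lt; lra.
  have hT2 : T * (n ^ 2 * Rmax ^ 2 * L) <= T ^ 2 * (n ^ 2 * Rmax ^ 2 * L).
    by apply: Rmult_le_compat_r; [apply: Rlt_le; nra|nra].
  rewrite eR; apply: (Rmult_le_reg_r (128 * T * n ^ 2 * Rmax ^ 2)) => //.
  rewrite /Rdiv [X in _ <= X]Rmult_assoc Rinv_l; lra.
Qed.

Lemma sample_size_bound (n m T l0 eps Rmax delta : R) (N0 : nat) :
  2 <= n -> 1 <= m -> 1 <= T -> 0 < l0 -> l0 * (n * m) <= 1 -> 0 < eps -> eps < 4 * Rmax ->
  0 < delta < 1 ->
  128 * T ^ 2 * n ^ 2 * Rmax ^ 2 * ln (2 * n ^ 2 * m / delta) / (l0 ^ 2 * eps ^ 2) <= INR N0 ->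
  n * (m * (exp (INR N0 * T * l0 / 4 / (2 * T)) * (1 - l0 / 4) ^ N0 +
     n * (INR 2 * exp (- ((eps / (4 * T * n * Rmax)) ^ 2 * (INR N0 * T * l0 / 4) / 2))))) <= delta.
Proof.
move=> hn hm hT hl0 hl1 he he4 hd hN.
have hL := log_level_pos _ _ _ hn hm hd.
set L := ln _ in hL hN.
have hl2 : l0 <= 1/2.
  have : l0 * 2 <= l0 * (n * m) by apply: Rmult_le_compat_l; nra.
  lra.
have [hN1 hN2] := sample_size_exponents _ _ _ _ _ _ _ hn hT (conj hl0 hl2) he he4 hL hN.
set u := delta / (2 * n ^ 2 * m).
have hu : 0 <= u <= 1/2.
  rewrite /u; split; first by apply: Rmult_le_pos; [lra|apply/Rlt_le/Rinv_0_lt_compat; nra].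
  apply: (Rmult_le_reg_r (2 * n ^ 2 * m)); first nra.
  rewrite /Rdiv Rmult_assoc Rinv_l; nra.
have eL : exp (- L) = u.
  rewrite exp_Ropp /L exp_ln; last by apply: Rdiv_lt_0_compat; nra.
  rewrite /u; field; split; [lra|split; nra].
have visit_bound : exp (INR N0 * T * l0 / 4 / (2 * T)) * (1 - l0 / 4) ^ N0 <= u.
  apply: Rle_trans (_ : exp (INR N0 * T * l0 / 4 / (2 * T)) * exp (- (l0 / 4)) ^ N0 <= _).
    apply: Rmult_le_compat_l; first exact/Rlt_le/exp_pos.
    apply: pow_incr; split; first lra.
    by have := exp_ineq1_le (- (l0 / 4)); lra.
  rewrite exp_pow -exp_plus -eL; apply: exp_le_mono.
  have -> : INR N0 * T * l0 / 4 / (2 * T) = INR N0 * l0 / 8 by field; lra.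
  lra.
have dev_bound : exp (- ((eps / (4 * T * n * Rmax)) ^ 2 * (INR N0 * T * l0 / 4) / 2)) <= u / 2.
  apply: Rle_trans (_ : exp (- L) * exp (- L) <= _); first by rewrite -exp_plus; apply: exp_le_mono; lra.
  rewrite eL; nra.
have -> : INR 2 = 2 by rewrite /=; ring.
apply: Rle_trans (_ : n * (m * (u + n * (2 * (u / 2)))) <= _).
  apply: Rmult_le_compat_l; first lra.
  apply: Rmult_le_compat_l; first lra.
  by apply: Rplus_le_compat => //; apply: Rmult_le_compat_l; lra.
have -> : n * (m * (u + n * (2 * (u / 2)))) = delta * (1 + n) / (2 * n).
  by rewrite /u; field; split; lra.
apply: (Rmult_le_reg_r (2 * n)); first lra.
rewrite /Rdiv Rmult_assoc Rinv_l; nra.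
Qed.

Lemma occupancy_lower_bound {S A : finType} (P : S -> A -> S -> R) pi T mu l0 :
  is_kernel P -> is_policy pi -> is_dist mu -> (1 <= T)%N ->
  (forall s a, l0 <= Lam P pi T mu s a) -> l0 * (INR #|S| * INR #|A|) <= 1.
Proof.
move=> hP hpi hmu hT hl0; rewrite -(Lam_total P pi T mu hP hpi hmu hT).
have -> : l0 * (INR #|S| * INR #|A|) = sumR (fun _ : S => sumR (fun _ : A => l0)).
  by rewrite !sumR_const; ring.
by apply: sumR_le => s; apply: sumR_le => a; exact: hl0.
Qed.

(* A group of positive mass has a state, so there are at least two states. *)
Lemma card_states_ge2 {St : finType} {D : bool * St -> R} {z} : 0 < pz D z ->
  2 <= INR #|{: bool * St}|.
Proof.
move=> hz; have hSt : (0 < #|St|)%N.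
  apply/card_gt0P; case: (pickP St) => [x _|h]; first by exists x.
  by move: hz; rewrite /pz /sumR big1 => [|i]; [lra|have := h i].
rewrite card_prod card_bool mult_INR.
have : 1 <= INR #|St| by apply: (le_INR 1); apply/leP.
rewrite /=; lra.
Qed.

Lemma good_data_likely (S A : finType) (D : S -> R) (P : S -> A -> S -> R) (pi0 : S -> A -> R)
    (T N0 : nat) (Rmax lambda0 eps delta : R) :
  is_dist D -> is_kernel P -> is_policy pi0 -> (1 <= T)%N -> 2 <= INR #|S| -> (0 < #|A|)%N ->
  0 < lambda0 -> (forall s a, lambda0 <= Lam P pi0 T D s a) ->
  0 < eps -> eps < 4 * Rmax -> 0 < delta < 1 ->
  128 * INR T ^ 2 * INR #|S| ^ 2 * Rmax ^ 2 * ln (2 * INR #|S| ^ 2 * INR #|A| / delta)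
      / (lambda0 ^ 2 * eps ^ 2) <= INR N0 ->
  1 - delta <= \big[Rplus/R0]_(d in [set d : dataset S A T N0 | good_data P (eps / (4 * INR T * INR #|S| * Rmax))
                                       (INR N0 * INR T * lambda0 / 4) d]) data_prob D pi0 P d.
Proof.
move=> hD hP hpi hT hn hA hl0 hLam he he4 hd hN.
have hT' : 1 <= INR T by apply: (le_INR 1); apply/leP.
have hm : 1 <= INR #|A| by apply: (le_INR 1); apply/leP.
have hl1 := occupancy_lower_bound _ _ _ _ _ hP hpi hD hT hLam.
have hlam : 0 <= eps / (4 * INR T * INR #|S| * Rmax) <= 1/2.
  have hTn : 2 <= INR T * INR #|S| by nra.
  have hden : 0 < 4 * INR T * INR #|S| * Rmax by nra.
  split; first by apply: Rmult_le_pos; [lra|apply/Rlt_le/Rinv_0_lt_compat].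
  apply: (Rmult_le_reg_r (4 * INR T * INR #|S| * Rmax)) => //.
  rewrite /Rdiv Rmult_assoc Rinv_l; nra.
apply: Rle_trans (good_mass D pi0 P hT hD hP hpi _ _ lambda0 hlam hLam).
apply/Rplus_le_compat_l/Ropp_le_contravar.
exact: sample_size_bound.
Qed.

(* Deterministic part: an estimated kernel that is entrywise within
   eps / (4 T |S| Rmax) of the true one yields the guarantee, since every
   return is then estimated to within eps / 8. *)
Lemma accurate_model_guarantee {St A : finType} (D : bool * St -> R)
    (P Ph : bool * St -> A -> bool * St -> R) (Rw rho : bool * St -> A -> R) (T : nat)
    (Rmax eps : R) (pistar : bool * St -> A -> R) :
  is_dist D -> is_kernel P -> is_kernel Ph -> (1 <= T)%N ->
  0 < pz D Zmaj -> 0 < pz D Zmin -> 0 < Rmax ->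
  (forall s a, Rabs (Rw s a) <= Rmax) -> (forall s a, Rabs (rho s a) <= Rmax) -> 0 < eps ->
  (forall s a s', Rabs (P s a s' - Ph s a s') <= eps / (4 * INR T * INR #|{: bool * St}| * Rmax)) ->
  PiDP P T D rho (eps / 4) pistar ->
  (forall pi, PiDP P T D rho (eps / 4) pi -> Ret P pi T D Rw <= Ret P pistar T D Rw) ->
  plugin_guarantee D P Ph Rw rho T eps pistar.
Proof.
move=> hD hP hPh hT hmaj hmin hR hRw hrho he hclose.
have hT' : 0 < INR T by apply: lt_0_INR; apply/ltP.
have hn := card_states_ge2 hmaj.
have hden : 0 < 4 * INR T * INR #|{: bool * St}| * Rmax.
  by repeat apply: Rmult_lt_0_compat; lra.
set e := eps / _ in hclose.
have he0 : 0 <= e by apply: Rmult_le_pos; [lra|apply/Rlt_le/Rinv_0_lt_compat].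
have eta_eq : Rmax * (INR T * (INR #|{: bool * St}| * e)) / 2 = eps / 8.
  by rewrite /e; field; split; lra.
apply: (plugin_conclusion D P Ph Rw rho T eps (eps / 8)) => //; last lra.
- by move=> pi hpi; rewrite -eta_eq; apply: Ret_diff => //; lra.
- move=> pi z hpi; rewrite -eta_eq; apply: Ret_diff => //; try lra.
  by case: z; exact: Dz_dist.
Qed.

Theorem theorem8 (St A : finType) (D : bool * St -> R)
  (P : bool * St -> A -> bool * St -> R) (Rw rho : bool * St -> A -> R)
  (T : nat) (Rmax : R) (pi0 : bool * St -> A -> R) (lambda0 eps delta : R)
  (N0 : nat)
  (Q : {ffun 'I_N0 -> episode (bool * St)%type A T} ->
       bool * St -> A -> bool * St -> R)
  (pistar : bool * St -> A -> R) :
  (0 < #|A|)%N ->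
  is_dist D -> is_kernel P -> (1 <= T)%N ->
  0 < pz D Zmaj -> 0 < pz D Zmin ->
  0 < Rmax ->
  (forall s a, Rabs (Rw s a) <= Rmax) ->
  (forall s a, Rabs (rho s a) <= Rmax) ->
  is_policy pi0 ->
  0 < lambda0 ->
  (forall s a, lambda0 <= Lam P pi0 T D s a) ->
  0 < eps -> 0 < delta ->
  128 * INR T ^ 2 * INR #|{: bool * St}| ^ 2 * Rmax ^ 2
      * ln (2 * INR #|{: bool * St}| ^ 2 * INR #|A| / delta)
      / (lambda0 ^ 2 * eps ^ 2) <= INR N0 ->
  (forall d, is_kernel (Q d)) ->
  PiDP P T D rho (eps / 4) pistar ->
  (forall pi, PiDP P T D rho (eps / 4) pi -> Ret P pi T D Rw <= Ret P pistar T D Rw) ->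
  exists G : {set {ffun 'I_N0 -> episode (bool * St)%type A T}},
    1 - delta <= \big[Rplus/R0]_(d in G) data_prob D pi0 P d /\
    forall d, d \in G ->
      (exists pi, PiDP (Phat (Q d) d) T D rho (eps / 2) pi) /\
      forall pihat,
        PiDP (Phat (Q d) d) T D rho (eps / 2) pihat ->
        (forall pi, PiDP (Phat (Q d) d) T D rho (eps / 2) pi ->
           Ret (Phat (Q d) d) pi T D Rw <= Ret (Phat (Q d) d) pihat T D Rw) ->
        PiDP P T D rho eps pihat /\
        Ret P pistar T D Rw - Ret P pihat T D Rw <= eps.
Proof.
move=> hA hD hP hT hmaj hmin hR hRw hrho hpi0 hl0 hLam he hd hN hQ hstar hmax.
have hPhat d := Phat_kernel (Q d) d (hQ d).
(* delta >= 1: the empty set of datasets suffices *)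
case: (Rle_lt_dec 1 delta) => hd1.
  by exists set0; split=> [|d]; [rewrite big_set0; lra|rewrite in_set0].
(* eps >= 4 Rmax: every dataset works *)
case: (Rle_lt_dec (4 * Rmax) eps) => he4.
  exists setT; split.
    rewrite (eq_bigl xpredT) => [|d]; last by rewrite in_setT.
    by rewrite -/(sumR _) (data_total _ _ T N0 D pi0 P hD hP hpi0); lra.
  by move=> d _; apply: large_eps_conclusion.
(* otherwise the good datasets work, for lam = eps / (4 T |S| Rmax), k = N T lambda0 / 4 *)
have hn := card_states_ge2 hmaj.
have hk : 0 < INR N0 * INR T * lambda0 / 4.
  have hT' : 1 <= INR T by apply: (le_INR 1); apply/leP.
  have hm : 1 <= INR #|A| by apply: (le_INR 1); apply/leP.
  have := sample_size_pos _ _ _ _ _ _ _ _ hn hm hT' hl0 he hR (conj hd hd1) hN.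
  by move=> hN0; apply: Rdiv_lt_0_compat; [repeat apply: Rmult_lt_0_compat|]; lra.
exists [set d | good_data P (eps / (4 * INR T * INR #|{: bool * St}| * Rmax))
                  (INR N0 * INR T * lambda0 / 4) d]; split.
  exact: good_data_likely.
move=> d; rewrite inE => hg.
apply: (accurate_model_guarantee D P (Phat (Q d) d) Rw rho T Rmax eps) => // s a s'.
by rewrite Rabs_minus_sym; exact: good_Phat hk hg.
Qed.
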